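(* Let $A$ be a finite-dimensional commutative Frobenius algebra over a field with $\dim(A)>1$. Suppose $K$ and $L$ are arrows of $\mathbf{2Cob}$ with $K\neq L$ (as arrows of $\mathbf{2Cob}$) but $F_AK=F_AL$ (as linear maps, in particular with equal domain and codomain). Then there exist integers $n,m\ge 0$, $k_1\ge\dots\ge k_n\ge 0$ and $l_1\ge\dots\ge l_m\ge 0$ with $(k_1,\dots,k_n)\neq(l_1,\dots,l_m)$ such that \[ \bigotimes_{i=1}^n E_{0,k_i,0}=_A\bigotimes_{j=1}^m E_{0,l_j,0} \] (an empty tensor product denoting the empty cobordism $\mathbf{0}\to\mathbf{0}$).
   Context: $\mathbf{2Cob}$ is the category whose objects are $\mathbf{0},\mathbf{1},\mathbf{2},\dots$ ($\mathbf{n}$ being a sequence of $n$ oriented circles) and whose arrows $\mathbf{n}\to\mathbf{m}$ are diffeomorphism classes (rel boundary) of oriented 2-cobordisms with $n$ ingoing and $m$ outgoing boundary circles; it is symmetric monoidal with $\otimes$ given by disjoint union placed side by side. For $m,k,n\ge 0$, $E_{m,k,n}$ denotes the connected 2-cobordism of genus $k$ with $n$ ingoing and $m$ outgoing boundary circles; thus $E_{0,k,0}$ is the closed connected orientable surface of genus $k$ viewed as a cobordism $\mathbf{0}\to\mathbf{0}$. For a commutative Frobenius algebra $(A,\mu,\eta,\delta,\varepsilon)$, $F_A$ denotes the symmetric strong monoidal functor $\mathbf{2Cob}\to\mathbf{Vect}$ with $F_A\mathbf{1}=A$ and $F_A(E_{1,0,2})=\mu$, $F_A(E_{1,0,0})=\eta$,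 $F_A(E_{2,0,1})=\delta$, $F_A(E_{0,0,1})=\varepsilon$. One writes $K=_A L$ if $F_AK=F_AL$. *)

From HB Require Import structures.
From mathcomp Require Import all_boot all_order all_algebra.
Set Implicit Arguments. Unset Strict Implicit. Unset Printing Implicit Defensive.
Import Order.TTheory GRing.Theory Num.Theory.
Local Open Scope ring_scope.

(* A = F^d with basis e_0..e_(d-1);                                          *)
(*   e_i * e_j        = \sum_k fmu i j k e_k          (multiplication mu)    *)
(*   1                = \sum_k feta k e_k             (unit eta)             *)
(*   delta e_i        = \sum_(j,k) fdelta i j k e_j (x) e_k  (comultipl.)    *)
(*   eps e_i          = feps i                        (counit)               *)
(*   delta o mu = (mu (x) 1) o (1 (x) delta) = (1 (x) mu) o (delta (x) 1).   *)
Record frob (F : fieldType) (d : nat) := Frob {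
  fmu : 'I_d -> 'I_d -> 'I_d -> F;
  feta : 'I_d -> F;
  fdelta : 'I_d -> 'I_d -> 'I_d -> F;
  feps : 'I_d -> F;
  fmu_assoc : forall i j l r,
    \sum_(k < d) fmu i j k * fmu k l r = \sum_(k < d) fmu j l k * fmu i k r;
  fmu_comm : forall i j k, fmu i j k = fmu j i k;
  fmu_unit : forall j k, \sum_(i < d) feta i * fmu i j k = (j == k)%:R;
  fdelta_coassoc : forall i a b c,
    \sum_(j < d) fdelta i j c * fdelta j a b
    = \sum_(k < d) fdelta i a k * fdelta k b c;
  fdelta_counitl : forall i k, \sum_(j < d) fdelta i j k * feps j = (i == k)%:R;
  fdelta_counitr : forall i j, \sum_(k < d) fdelta i j k * feps k = (i == j)%:R;
  frobenius_l : forall i j a b,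
    \sum_(k < d) fmu i j k * fdelta k a b = \sum_(p < d) fdelta j p b * fmu i p a;
  frobenius_r : forall i j a b,
    \sum_(k < d) fmu i j k * fdelta k a b = \sum_(p < d) fdelta i a p * fmu p j b
}.

Section FA.
Variables (F : fieldType) (d : nat) (A : frob F d).

(* n-fold multiplication A^(x)n -> A (eta for n = 0): coefficient at e_k of
   the product e_(x_1) ... e_(x_n). *)
Fixpoint mun (x : seq 'I_d) (k : 'I_d) : F :=
  match x with
  | [::] => feta A k
  | i :: s => \sum_(p < d) mun s p * fmu A i p k
  end.

(* m-fold comultiplication A -> A^(x)m (eps for m = 0): coefficient of
   e_(y_1) (x) ... (x) e_(y_m) in the image of e_i. *)
Fixpoint deltam (i : 'I_d) (y : seq 'I_d) : F :=
  match y with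
  | [::] => feps A i
  | a :: s => \sum_(p < d) fdelta A i a p * deltam p s
  end.

Definition handle (i k : 'I_d) : F :=
  \sum_(a < d) \sum_(b < d) fdelta A i a b * fmu A a b k.

Fixpoint handlepow (g : nat) (p q : 'I_d) : F :=
  match g with
  | 0 => (p == q)%:R
  | g'.+1 => \sum_(r < d) handlepow g' p r * handle r q
  end.

(* F_A(E_{m,g,n}) = delta^(m) o (mu o delta)^g o mu^(n):
   matrix coefficient from input basis tensor x to output basis tensor y. *)
Definition conn (x : seq 'I_d) (g : nat) (y : seq 'I_d) : F :=
  \sum_(p < d) \sum_(q < d) mun x p * handlepow g p q * deltam q y.

End FA.

(* Arrows n -> m of 2Cob, via the classification of oriented surfaces:      *)
(* a cobordism is determined up to diffeomorphism rel boundary by           *)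
(*  - the partition of the n + m boundary circles (inputs 0..n-1 are         *)
(*    lshift, outputs are rshift in 'I_(n+m)) into connected components,     *)
(*    given by block labels cblk,                                            *)
(*  - the genus of each such component (cgen applied to the block label),   *)
(*  - the multiset of genera of the closed components (cclosed).            *)
(* Two representatives denote the same arrow iff cob_same holds.            *)
Record cob (n m : nat) := Cob {
  cblk : 'I_(n + m) -> 'I_(n + m);
  cgen : 'I_(n + m) -> nat;
  cclosed : seq nat
}.

Definition cob_same n m (K L : cob n m) : Prop :=
  [/\ forall i j : 'I_(n + m), (cblk K i == cblk K j) = (cblk L i == cblk L j),
      forall i : 'I_(n + m), cgen K (cblk K i) = cgen L (cblk L i)
    & perm_eq (cclosed K) (cclosed L)].

(* The functor F_A on arrows: matrix coefficient of F_A K at input basis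
   tensor e_x (x : n.-tuple) and output basis tensor e_y (y : m.-tuple):
   product of the values of the connected components. *)
Definition FA (F : fieldType) (d : nat) (A : frob F d) n m (K : cob n m)
    (x : n.-tuple 'I_d) (y : m.-tuple 'I_d) : F :=
  (\prod_(g <- cclosed K) conn A [::] g [::]) *
  \prod_(r <- undup [seq cblk K i | i <- enum 'I_(n + m)])
     conn A [seq tnth x i | i <- enum 'I_n & cblk K (lshift m i) == r]
            (cgen K r)
            [seq tnth y j | j <- enum 'I_m & cblk K (rshift n j) == r].

Definition FA_eq (F : fieldType) (d : nat) (A : frob F d) n m (K L : cob n m) : Prop :=
  forall x y, FA A K x y = FA A L x y.

(* the tensor product E_{0,k_1,0} (x) ... (x) E_{0,k_n,0} : 0 -> 0 *)
Definition closed_cob (ks : seq nat) : cob 0 0 :=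
  @Cob 0 0 (fun i => i) (fun _ => 0%N) ks.

From HB Require Import structures.
From mathcomp Require Import all_boot all_order all_algebra.
Set Implicit Arguments. Unset Strict Implicit. Unset Printing Implicit Defensive.
Import GRing.Theory.

(* Cap every boundary circle k of a cobordism by a surface of genus w k: an
   ingoing circle by eta followed by w k handles, an outgoing one by w k
   handles followed by epsilon. Under F_A this contracts the matrix of F_A K
   against fixed vectors, and yields the value of the closed surface obtained
   from K, in which every connected component has become closed, its genus
   raised by the weights of its boundary circles. So F_A K = F_A L makes the
   two resulting tensor products of closed surfaces A-equal.
   With w k = N * 2 ^ k and N above every genus occurring in K and L, a capped
   component has genus g + N * c, where g is its genus and the binary digits of
   c are its boundary circles, while the closed components of K stay below N.
   Thus the multiset of capped genera determines K in 2Cob, and for K <> L the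
   two multisets, sorted, are the required sequences. *)

Lemma sum_bits_lt (f : nat -> bool) K : \sum_(k < K) f k * 2 ^ k < 2 ^ K.
Proof.
elim: K => [|K IH]; first by rewrite big_ord0.
rewrite big_ord_recr /= expnS mul2n -addnn.
have fK : f K * 2 ^ K <= 2 ^ K by case: (f K); rewrite ?mul1n.
exact: leq_trans (leq_add IH fK).
Qed.

Lemma odd_sum_bits (f : nat -> bool) K i : i < K ->
  odd ((\sum_(k < K) f k * 2 ^ k) %/ 2 ^ i) = f i.
Proof.
elim: K => [//|K IH] iK; rewrite big_ord_recr /=.
have [lt_iK|ge_iK] := ltnP i K; last first.
  have -> : i = K by apply/eqP; rewrite eqn_leq ge_iK -ltnS iK.
  rewrite addnC divnMDl ?expn_gt0 // divn_small ?sum_bits_lt // addn0.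
  by case: (f K).
have -> : f K * 2 ^ K = f K * 2 ^ (K - i) * 2 ^ i.
  by rewrite -mulnA -expnD subnK // ltnW.
rewrite divnDr ?dvdn_mull // mulnK ?expn_gt0 // oddD IH // oddM oddX.
by rewrite subn_eq0 leqNgt lt_iK andbF addbF.
Qed.

Local Open Scope ring_scope.

Lemma exchange_big3 (R : nmodType) (I J K : finType) (f : I -> J -> K -> R) :
  \sum_i \sum_j \sum_k f i j k = \sum_j \sum_k \sum_i f i j k.
Proof. by rewrite exchange_big; apply: eq_bigr => j _; rewrite exchange_big. Qed.

Section Handle.
Variables (F : fieldType) (d : nat) (A : frob F d).
Local Notation mu := (fmu A).
Local Notation delta := (fdelta A).
Local Notation h := (handle A).
Local Notation hp := (handlepow A).

Lemma handlepowS g p q : hp g.+1 p q = \sum_r hp g p r * h r q.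
Proof. by []. Qed.

Lemma handlepowD a g p q : hp (a + g) p q = \sum_r hp a p r * hp g r q.
Proof.
elim: g q => [|g IH] q.
  rewrite addn0 (bigD1 q) //= eqxx mulr1 big1 ?addr0 // => r /negbTE.
  by rewrite eq_sym => ->; rewrite mulr0.
rewrite addnS !handlepowS; under eq_bigr do rewrite IH mulr_suml.
rewrite exchange_big; apply: eq_bigr => r _.
by rewrite mulr_sumr; apply: eq_bigr => s _; rewrite mulrA.
Qed.

Lemma handlepow1 p q : hp 1 p q = h p q.
Proof.
rewrite /= (bigD1 p) //= eqxx mul1r big1 ?addr0 // => r /negbTE.
by rewrite eq_sym => ->; rewrite mul0r.
Qed.

(* Both sides are mu o (1 (x) mu) o (delta (x) 1), by associativity and the
   Frobenius relation respectively. *)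
Lemma handle_mul i q k :
  \sum_p h i p * mu p q k = \sum_r mu i q r * h r k.
Proof.
transitivity (\sum_a \sum_b \sum_p delta i a b * (mu b q p * mu a p k)).
  under eq_bigr do rewrite big_distrl; under eq_bigr do under eq_bigr do rewrite big_distrl.
  rewrite exchange_big3; apply: eq_bigr => a _; apply: eq_bigr => b _.
  rewrite -big_distrr -fmu_assoc big_distrr; apply: eq_bigr => p _.
  by rewrite /= mulrA.
transitivity (\sum_a \sum_b (\sum_r mu i q r * delta r a b) * mu a b k).
  apply: eq_bigr => a _; rewrite exchange_big; apply: eq_bigr => b _.
  rewrite frobenius_r big_distrl; apply: eq_bigr => p _.
  by rewrite /= mulrA.
transitivity (\sum_r \sum_a \sum_b mu i q r * delta r a b * mu a b k).
  rewrite [RHS]exchange_big3; apply: eq_bigr => a _; apply: eq_bigr => b _.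
  by rewrite big_distrl.
apply: eq_bigr => r _; rewrite big_distrr; apply: eq_bigr => a _.
by rewrite big_distrr; apply: eq_bigr => b _; rewrite /= mulrA.
Qed.

(* Both sides are (mu (x) 1) o (delta (x) 1) o delta, by coassociativity and
   the Frobenius relation respectively. *)
Lemma handle_comul i s p :
  \sum_q h q s * delta i q p = \sum_r h i r * delta r s p.
Proof.
symmetry; transitivity (\sum_a \sum_b \sum_t delta i a b * (delta b t p * mu a t s)).
  under eq_bigr do rewrite big_distrl; under eq_bigr do under eq_bigr do rewrite big_distrl.
  rewrite exchange_big3; apply: eq_bigr => a _; apply: eq_bigr => b _.
  rewrite -big_distrr -frobenius_l big_distrr; apply: eq_bigr => r _.
  by rewrite /= mulrA.
transitivity (\sum_a \sum_t (\sum_j delta i j p * delta j a t) * mu a t s).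
  apply: eq_bigr => a _; rewrite exchange_big; apply: eq_bigr => t _.
  rewrite fdelta_coassoc big_distrl; apply: eq_bigr => b _.
  by rewrite /= mulrA.
transitivity (\sum_j \sum_a \sum_t delta i j p * delta j a t * mu a t s).
  rewrite [RHS]exchange_big3; apply: eq_bigr => a _; apply: eq_bigr => t _.
  by rewrite big_distrl.
apply: eq_bigr => j _; rewrite mulrC big_distrr; apply: eq_bigr => a _.
by rewrite big_distrr; apply: eq_bigr => t _; rewrite /= mulrA.
Qed.

(* [cap a] and [cocap b] are the coordinates of F_A(E_{1,a,0}) and F_A(E_{0,b,1}). *)
Fixpoint cap a p := if a is a'.+1 then \sum_s cap a' s * h s p else feta A p.
Fixpoint cocap b q := if b is b'.+1 then \sum_s h q s * cocap b' s else feps A q.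

Lemma mul_cap a q k : \sum_p cap a p * mu p q k = hp a q k.
Proof.
elim: a k => [|a IH] k; first exact: fmu_unit.
transitivity (\sum_s cap a s * \sum_r mu s q r * h r k).
  under eq_bigr do rewrite mulr_suml; rewrite exchange_big; apply: eq_bigr => s _.
  by rewrite -handle_mul mulr_sumr; apply: eq_bigr => p _; rewrite mulrA.
rewrite handlepowS; under eq_bigr do rewrite mulr_sumr.
rewrite exchange_big; apply: eq_bigr => r _.
by rewrite -IH mulr_suml; apply: eq_bigr => s _; rewrite mulrA.
Qed.

Lemma comul_cocap b i p : \sum_q cocap b q * delta i q p = hp b i p.
Proof.
elim: b i p => [|b IH] i p.
  by under eq_bigr do rewrite mulrC; rewrite fdelta_counitl.
transitivity (\sum_s cocap b s * \sum_r h i r * delta r s p).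
  under eq_bigr do rewrite mulr_suml; rewrite exchange_big; apply: eq_bigr => s _.
  by rewrite -handle_comul mulr_sumr; apply: eq_bigr => q _; rewrite mulrCA mulrA.
rewrite -add1n handlepowD; under eq_bigr do rewrite mulr_sumr.
rewrite exchange_big.
apply: eq_bigr => r _.
by rewrite handlepow1 -IH mulr_sumr; apply: eq_bigr => s _; rewrite mulrCA.
Qed.

Lemma conn_cap a X g Y : \sum_p cap a p * conn A (p :: X) g Y = conn A X (a + g) Y.
Proof.
have mun_cap p : \sum_p0 cap a p0 * mun A (p0 :: X) p = \sum_s mun A X s * hp a s p.
  under eq_bigr do rewrite [mun _ _ _]/= mulr_sumr.
  rewrite exchange_big; apply: eq_bigr => s _.
  by rewrite -mul_cap mulr_sumr; apply: eq_bigr => p0 _; rewrite mulrCA.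
transitivity (\sum_p \sum_q (\sum_s mun A X s * hp a s p) * hp g p q * deltam A q Y).
  under eq_bigr do rewrite mulr_sumr; rewrite exchange_big; apply: eq_bigr => p _.
  under eq_bigr do rewrite mulr_sumr; rewrite exchange_big; apply: eq_bigr => q _.
  by rewrite -mun_cap !mulr_suml; apply: eq_bigr => p0 _; rewrite !mulrA.
rewrite /conn [LHS]exchange_big [RHS]exchange_big; apply: eq_bigr => q _.
under [RHS]eq_bigr do rewrite handlepowD mulr_sumr mulr_suml.
under eq_bigr do rewrite !mulr_suml.
by rewrite exchange_big; apply: eq_bigr => s _; apply: eq_bigr => p _; rewrite !mulrA.
Qed.

Lemma conn_cocap b X g Y : \sum_q cocap b q * conn A X g (q :: Y) = conn A X (g + b) Y.
Proof.
have deltam_cocap q :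
    \sum_q0 cocap b q0 * deltam A q (q0 :: Y) = \sum_s hp b q s * deltam A s Y.
  under eq_bigr do rewrite [deltam _ _ _]/= mulr_sumr.
  rewrite exchange_big; apply: eq_bigr => s _.
  by rewrite -comul_cocap mulr_suml; apply: eq_bigr => q0 _; rewrite mulrA.
transitivity (\sum_p \sum_q mun A X p * hp g p q * \sum_s hp b q s * deltam A s Y).
  under eq_bigr do rewrite mulr_sumr; rewrite exchange_big; apply: eq_bigr => p _.
  under eq_bigr do rewrite mulr_sumr; rewrite exchange_big; apply: eq_bigr => q _.
  by rewrite -deltam_cocap mulr_sumr; apply: eq_bigr => q0 _; rewrite mulrCA.
rewrite /conn; apply: eq_bigr => p _.
under eq_bigr do rewrite mulr_sumr; rewrite exchange_big; apply: eq_bigr => s _.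
by rewrite handlepowD mulr_sumr mulr_suml; apply: eq_bigr => q _; rewrite !mulrA.
Qed.
End Handle.

Section Contraction.
Variables (R : comPzSemiRingType) (I : finType) (T : eqType).

Definition block_seq n (x : n.-tuple I) (b : 'I_n -> T) (r : T) : seq I :=
  [seq tnth x i | i <- enum 'I_n & b i == r].

Lemma block_seq0 (x : 0.-tuple I) (b : 'I_0 -> T) r : block_seq x b r = [::].
Proof. by rewrite /block_seq enum_ord0. Qed.

Lemma block_seq_cons n p (x : n.-tuple I) (b : 'I_n.+1 -> T) r :
  block_seq [tuple of p :: x] b r =
  if b ord0 == r then p :: block_seq x (fun i => b (lift ord0 i)) r
  else block_seq x (fun i => b (lift ord0 i)) r.
Proof.
rewrite /block_seq enum_ordSl /=.
case: ifP => _ /=; rewrite filter_map -map_comp; try congr (_ :: _);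
  by apply: eq_map => i /=; rewrite tnthS.
Qed.

Lemma big_tuple0 (f : 0.-tuple I -> R) : \sum_x f x = f [tuple].
Proof. by rewrite (big_pred1 [tuple]) // => x; apply/esym/eqP; exact: tuple0. Qed.

Lemma big_tupleS n (f : n.+1.-tuple I -> R) :
  \sum_x f x = \sum_p \sum_(x : n.-tuple I) f [tuple of p :: x].
Proof.
rewrite pair_big /= (reindex (fun px : I * n.-tuple I => [tuple of px.1 :: px.2])) //=.
exists (fun x : n.+1.-tuple I => (thead x, [tuple of behead x])) => [[p x] _|x _] /=.
  by congr (_, _); apply: val_inj.
by rewrite [RHS]tuple_eta; apply: val_inj.
Qed.

(* [comp r s g] is the value of a connected component [r] of genus [g] whose
   boundary circles carry the basis indices [s]. *)
Variables (cap : nat -> I -> R) (comp : T -> seq I -> nat -> R).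
Hypothesis comp_cap : forall r a s g, \sum_p cap a p * comp r (p :: s) g = comp r s (a + g).

Lemma contract_caps (rs : seq T) n (b : 'I_n -> T) (w : 'I_n -> nat) (gen : T -> nat) :
  uniq rs -> (forall i, b i \in rs) ->
  \sum_(x : n.-tuple I) (\prod_(i < n) cap (w i) (tnth x i)) *
    \prod_(r <- rs) comp r (block_seq x b r) (gen r)
  = \prod_(r <- rs) comp r [::] (gen r + \sum_(i < n | b i == r) w i).
Proof.
move=> rs_uniq; elim: n b w gen => [|n IH] b w gen b_rs.
  rewrite big_tuple0 big_ord0 mul1r; apply: eq_bigr => r _.
  by rewrite block_seq0 big_ord0 addn0.
set r0 := b ord0; set b' := fun i => b (lift ord0 i).
pose gen' r := if r == r0 then (w ord0 + gen r)%N else gen r.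
have -> : \prod_(r <- rs) comp r [::] (gen r + \sum_(i < n.+1 | b i == r) w i)
        = \prod_(r <- rs) comp r [::] (gen' r + \sum_(i < n | b' i == r) w (lift ord0 i)).
  apply: eq_bigr => r _; rewrite big_mkcond big_ord_recl -big_mkcond /gen' /= eq_sym.
  by case: ifP => _; rewrite ?add0n // addnCA addnA.
rewrite -IH => [|i]; last exact: b_rs.
rewrite big_tupleS exchange_big; apply: eq_bigr => x _.
set P := \prod_(i < n) _.
set Rest := \prod_(r <- rs | r != r0) comp r (block_seq x b' r) (gen r).
have capped_at_r0 p : (\prod_(i < n.+1) cap (w i) (tnth [tuple of p :: x] i)) *
      \prod_(r <- rs) comp r (block_seq [tuple of p :: x] b r) (gen r)
    = P * Rest * (cap (w ord0) p * comp r0 (p :: block_seq x b' r0) (gen r0)).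
  rewrite big_ord_recl (bigD1_seq r0) ?b_rs //= block_seq_cons eqxx.
  have -> : \prod_(i < n) cap (w (lift ord0 i)) (tnth [tuple of p :: x] (lift ord0 i)) = P.
    by apply: eq_bigr => i _; rewrite tnthS.
  have -> : \prod_(r <- rs | r != r0) comp r (block_seq [tuple of p :: x] b r) (gen r) = Rest.
    by apply: eq_bigr => r; rewrite block_seq_cons eq_sym => /negbTE ->.
  by rewrite mulrACA mulrC (mulrC P).
under eq_bigr do rewrite capped_at_r0.
rewrite -mulr_sumr comp_cap (bigD1_seq r0) ?b_rs //= {1}/gen' eqxx -mulrA.
congr (_ * _); rewrite mulrC; congr (_ * _).
by apply: eq_bigr => r /negbTE; rewrite /gen' => ->.
Qed.
End Contraction.

Definition blocks n m (K : cob n m) : seq 'I_(n + m) :=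
  undup [seq cblk K i | i <- enum 'I_(n + m)].

Definition capped_genera n m (K : cob n m) (w : 'I_(n + m) -> nat) : seq nat :=
  cclosed K ++ [seq (cgen K r + \sum_(k | cblk K k == r) w k)%N | r <- blocks K].

Lemma mem_blocks n m (K : cob n m) k : cblk K k \in blocks K.
Proof. by rewrite mem_undup map_f ?mem_enum. Qed.

Lemma FA_capped (F : fieldType) (d : nat) (A : frob F d) n m (K : cob n m)
    (w : 'I_(n + m) -> nat) :
  \sum_(x : n.-tuple 'I_d) \sum_(y : m.-tuple 'I_d)
    (\prod_(i < n) cap A (w (lshift m i)) (tnth x i)) *
    (\prod_(j < m) cocap A (w (rshift n j)) (tnth y j)) * FA A K x y
  = \prod_(g <- capped_genera K w) conn A [::] g [::].
Proof.
pose bi i := cblk K (lshift m i); pose bo j := cblk K (rshift n j).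
have uniq_blocks : uniq (blocks K) by exact: undup_uniq.
rewrite /capped_genera big_cat big_map /=.
set C := \prod_(g <- cclosed K) _.
transitivity (C * \sum_(y : m.-tuple 'I_d) (\prod_(j < m) cocap A (w (rshift n j)) (tnth y j)) *
   \sum_(x : n.-tuple 'I_d) (\prod_(i < n) cap A (w (lshift m i)) (tnth x i)) *
      \prod_(r <- blocks K) conn A (block_seq x bi r) (cgen K r) (block_seq y bo r)).
  rewrite exchange_big mulr_sumr; apply: eq_bigr => y _.
  rewrite !mulr_sumr; apply: eq_bigr => x _.
  by rewrite /FA -/C mulrCA; congr (_ * _); rewrite mulrAC mulrC.
congr (C * _).
transitivity (\sum_(y : m.-tuple 'I_d) (\prod_(j < m) cocap A (w (rshift n j)) (tnth y j)) *
   \prod_(r <- blocks K) conn A [::] (cgen K r + \sum_(i < n | bi i == r) w (lshift m i))%N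
                                   (block_seq y bo r)).
  apply: eq_bigr => y _; congr (_ * _).
  apply: (contract_caps (comp := fun r s g => conn A s g (block_seq y bo r))) => //.
  - by move=> r a s g; exact: conn_cap.
  - by move=> i; exact: mem_blocks.
rewrite (contract_caps (comp := fun r s g => conn A [::] g s)) //.
- apply: eq_bigr => r _; congr (conn A [::] _ [::]).
  by rewrite [in RHS]big_split_ord addnA.
- by move=> r a s g; rewrite conn_cocap addnC.
- by move=> j; exact: mem_blocks.
Qed.

Section Decode.
Local Open Scope nat_scope.
Variables (n m : nat).

Definition cob_genera (K : cob n m) : seq nat :=
  cclosed K ++ [seq cgen K (cblk K k) | k <- enum 'I_(n + m)].

Definition binary_weights (N : nat) (k : 'I_(n + m)) : nat := N * 2 ^ k.

Definition block_code (K : cob n m) r : nat := \sum_(k | cblk K k == r) 2 ^ k.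

Lemma odd_block_code K r (i : 'I_(n + m)) :
  odd (block_code K r %/ 2 ^ i) = (cblk K i == r).
Proof.
pose f k := if insub k : option 'I_(n + m) is Some k' then cblk K k' == r else false.
have -> : block_code K r = \sum_(k < n + m) f k * 2 ^ k.
  rewrite /block_code big_mkcond; apply: eq_bigr => k _.
  by rewrite /f valK; case: (cblk K k == r); rewrite ?mul1n.
by rewrite (@odd_sum_bits f) // /f valK.
Qed.

Lemma has_block_code K (i : 'I_(n + m)) (P : pred 'I_(n + m)) :
  has (fun r => odd (block_code K r %/ 2 ^ i) && P r) (blocks K) = P (cblk K i).
Proof.
rewrite (eq_has (a2 := fun r => (cblk K i == r) && P r)); last first.
  by move=> r /=; rewrite odd_block_code.
apply/hasP/idP => [[r _ /andP [/eqP -> //]]|Pi].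
by exists (cblk K i); rewrite ?mem_blocks ?eqxx.
Qed.

Section Bounded.
Variables (N : nat) (K : cob n m).
Hypothesis genera_lt : {in cob_genera K, forall g, g < N}.

Lemma cgen_lt k : cgen K (cblk K k) < N.
Proof.
by apply: genera_lt; rewrite mem_cat; apply/orP; right; apply/mapP; exists k; rewrite ?mem_enum.
Qed.

Lemma capped_genus_block r : r \in blocks K ->
  let t := cgen K r + \sum_(k | cblk K k == r) binary_weights N k in
  [/\ N <= t, t %/ N = block_code K r & t %% N = cgen K r].
Proof.
rewrite mem_undup => /mapP [k _ ->] /=.
rewrite -big_distrr /= -/(block_code K _); have lt_gN := cgen_lt k.
have code_gt0 : 0 < block_code K (cblk K k).
  by have := odd_block_code K (cblk K k) k; rewrite eqxx; case: block_code; rewrite ?div0n.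
split.
- by apply: leq_trans (leq_addl _ _); rewrite leq_pmulr.
- by rewrite addnC mulnC divnMDl ?divn_small ?addn0 // (leq_ltn_trans _ lt_gN).
- by rewrite addnC mulnC modnMDl modn_small.
Qed.

Lemma has_capped_genera (P : nat -> nat -> bool) :
  has (fun t => (N <= t) && P (t %/ N) (t %% N)) (capped_genera K (binary_weights N))
  = has (fun r => P (block_code K r) (cgen K r)) (blocks K).
Proof.
rewrite has_cat has_map.
have -> : has (fun t => (N <= t) && P (t %/ N) (t %% N)) (cclosed K) = false.
  apply/hasP => -[t t_closed]; rewrite leqNgt genera_lt //.
  by rewrite mem_cat t_closed.
apply: eq_in_has => r /capped_genus_block [le_Nt div_t mod_t] /=.
by rewrite le_Nt div_t mod_t.
Qed.

Lemma capped_genera_small :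
  [seq t <- capped_genera K (binary_weights N) | t < N] = cclosed K.
Proof.
rewrite filter_cat -[RHS]cats0; congr (_ ++ _).
  by apply/all_filterP/allP => g g_closed; rewrite genera_lt // mem_cat g_closed.
apply/eqP/negPn; rewrite -has_filter.
by apply/hasP => -[_ /mapP [r /capped_genus_block [le_Nt _ _] ->]]; rewrite ltnNge le_Nt.
Qed.
End Bounded.

Lemma perm_capped_genera_same N (K L : cob n m) :
  {in cob_genera K, forall g, g < N} -> {in cob_genera L, forall g, g < N} ->
  perm_eq (capped_genera K (binary_weights N)) (capped_genera L (binary_weights N)) ->
  cob_same K L.
Proof.
move=> ltK ltL eqKL.
have decode P : has (fun r => P (block_code K r) (cgen K r)) (blocks K)
              = has (fun r => P (block_code L r) (cgen L r)) (blocks L).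
  by rewrite -(has_capped_genera ltK) -(has_capped_genera ltL) (perm_has _ eqKL).
split.
- move=> i j; have := decode (fun c _ => odd (c %/ 2 ^ i) && odd (c %/ 2 ^ j)).
  by rewrite !has_block_code !odd_block_code [_ == cblk K i]eq_sym [_ == cblk L i]eq_sym.
- move=> i; have := decode (fun c g => odd (c %/ 2 ^ i) && (g == cgen K (cblk K i))).
  by rewrite !has_block_code eqxx => /esym/eqP.
- by rewrite -(capped_genera_small ltK) -(capped_genera_small ltL) perm_filter.
Qed.

End Decode.

Lemma FA_closed_cob (F : fieldType) (d : nat) (A : frob F d) ks x y :
  FA A (closed_cob ks) x y = \prod_(g <- ks) conn A [::] g [::].
Proof. by rewrite /FA /= enum_ord0 big_nil mulr1. Qed.

Theorem proposition4 (F : fieldType) (d : nat) (A : frob F d) (hd : (1 < d)%N)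
    (n m : nat) (K L : cob n m) :
  ~ cob_same K L -> FA_eq A K L ->
  exists ks ls : seq nat,
    [/\ sorted geq ks, sorted geq ls, ks <> ls &
        FA_eq A (closed_cob ks) (closed_cob ls)].
Proof.
move=> not_same FA_KL.
set N := (\max_(g <- cob_genera K ++ cob_genera L) g).+1.
have lt_N g : g \in cob_genera K ++ cob_genera L -> (g < N)%N.
  by move=> g_in; rewrite ltnS (leq_bigmax_seq _ g_in).
have geq_total : total geq by move=> a b; exact: leq_total.
set cK := capped_genera K (binary_weights N); set cL := capped_genera L (binary_weights N).
exists (sort geq cK), (sort geq cL); split; try exact: sort_sorted.
- move=> eq_sort; apply: not_same; apply: (@perm_capped_genera_same _ _ N).
  + by move=> g g_in; rewrite lt_N // mem_cat g_in.
  + by move=> g g_in; rewrite lt_N // mem_cat g_in orbT.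
  + by rewrite -(perm_sort geq cK) eq_sort perm_sort.
- move=> x y; rewrite !FA_closed_cob !(perm_big _ (permEl (perm_sort geq _))) -!FA_capped.
  by apply: eq_bigr => x' _; apply: eq_bigr => y' _; rewrite FA_KL.
Qed.
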